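(* Let $A\ge1$, $K\ge1$, let $N$ be a positive integer and $C=N+1$, and let $\eta>0$ satisfy $\eta\le\frac{1}{270C}$. Consider optimistic online mirror descent with the log-barrier regularizer on $\Delta_A$: $\pi_1'=\pi_1=\frac1A\mathbf{1}$, and for $k=1,\dots,K$, a vector $\hat\beta_k\in\mathbb{R}_+^A$ is received satisfying $\sum_a\pi_k(a)\hat\beta_k(a)\le C$, and then $$\pi_{k+1}'=\arg\max_{\pi\in\Delta_A}\left\{\langle\pi,\hat\beta_k\rangle-D_\psi(\pi,\pi_k')\right\},\qquad \pi_{k+1}=\arg\max_{\pi\in\Delta_A}\left\{\langle\pi,\hat\beta_k\rangle-D_\psi(\pi,\pi_{k+1}')\right\}.$$ Then for every $k$ and every action $a$, $$|\pi_{k+1}(a)-\pi_k(a)|\le 120\,\eta\,C\,\pi_k(a).$$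
   Context: $\Delta_A$ is the probability simplex over $A$ actions. The regularizer is $\psi(x)=\frac1\eta\sum_{a=1}^A\log\frac{1}{x(a)}$ for $x\in\mathbb{R}_{+}^A$ (positive coordinates), and $D_\psi(x,x')=\psi(x)-\psi(x')-\langle\nabla\psi(x'),x-x'\rangle$ is its Bregman divergence. The vectors $\hat\beta_k$ may be chosen arbitrarily (adaptively) subject to the stated constraint. *)

From mathcomp Require Import all_boot all_order all_algebra.
From mathcomp Require Import reals exp.
Set Implicit Arguments. Unset Strict Implicit. Unset Printing Implicit Defensive.
Import Order.TTheory GRing.Theory Num.Theory.
Local Open Scope ring_scope.

Section LogBarrier.
Variables (R : realType) (A : nat).

Definition posvec (x : 'I_A -> R) : Prop := forall a, 0 < x a.

Definition in_simplex (x : 'I_A -> R) : Prop :=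
  (forall a, 0 <= x a) /\ \sum_(a < A) x a = 1.

Definition inner (x y : 'I_A -> R) : R := \sum_(a < A) x a * y a.

Definition psi (eta : R) (x : 'I_A -> R) : R :=
  eta^-1 * \sum_(a < A) ln (1 / x a).

Definition grad_psi (eta : R) (x : 'I_A -> R) : 'I_A -> R :=
  fun a => - (eta * x a)^-1.

Definition bregman (eta : R) (x x' : 'I_A -> R) : R :=
  psi eta x - psi eta x' - inner (grad_psi eta x') (fun a => x a - x' a).

(* Points of the
   simplex with a zero coordinate are outside the domain of psi (objective
   -oo), so the maximization is over simplex points with positive coordinates. *)
Definition is_omd_argmax (eta : R) (beta q p : 'I_A -> R) : Prop :=
  in_simplex p /\ posvec p /\
  forall x, in_simplex x -> posvec x ->
    inner x beta - bregman eta x q <= inner p beta - bregman eta p q.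

End LogBarrier.

From mathcomp Require Import all_boot all_order all_algebra.
From mathcomp Require Import reals exp.
From mathcomp Require Import ring lra.
Import Order.TTheory GRing.Theory Num.Theory.
Set Implicit Arguments. Unset Strict Implicit. Unset Printing Implicit Defensive.
Local Open Scope ring_scope.

(* Moving mass between two coordinates of the maximiser p shows
   that eta beta(c) - 1/q(c) + 1/p(c) is a constant mu (the Lagrange
   multiplier), i.e. p(c) (1 - eta q(c) beta(c) + mu q(c)) = q(c).  As
   sum_c eta q(c) beta(c) = eta <q, beta> is small, summing over c forces
   0 <= mu q(c) <= 4 eta M, so p/q lies in [1 - 4 eta M, 1 + 2 eta M] whenever
   <q, beta> <= M <= 1 / (10 eta).  If pi'_k/pi_k lies within a factor
   1 + 10 eta C, then <pi'_k, beta_k> <= (1 + 10 eta C) C, and composing the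
   two steps puts pi_{k+1}/pi_k in [1 - 20 eta C, 1 + 20 eta C]; the same
   bounds show that the invariant passes to pi'_{k+1}/pi_{k+1}. *)

Lemma sumr_supported2 (V : nmodType) (I : finType) (F : I -> V) a b : a != b ->
  (forall c, c != a -> c != b -> F c = 0) -> \sum_c F c = F a + F b.
Proof.
move=> ab F0; rewrite (bigD1 a) //= (bigD1 b) /=; last by rewrite eq_sym ab.
by rewrite big1 ?addr0 // => c /andP[ca cb]; exact: F0.
Qed.

Section RealFieldFacts.
Variable R : realFieldType.
Implicit Types u t x y K delta : R.

Lemma invfD_ge u t : 0 < u -> 0 <= t -> u^-1 - t / (u * u) <= (u + t)^-1.
Proof.
move=> u0 t0; have ut0 : 0 < u + t by lra.
rewrite -subr_ge0.
have -> : (u + t)^-1 - (u^-1 - t / (u * u)) = t * t / (u * u * (u + t)).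
  by field; rewrite !gt_eqF.
by rewrite divr_ge0 ?mulr_ge0 // ltW.
Qed.

Lemma invfB_le u t : 0 < u -> 0 <= t -> t <= u / 2 ->
  (u - t)^-1 <= u^-1 + 2 * t / (u * u).
Proof.
move=> u0 t0 tu; have ut0 : 0 < u - t by lra.
rewrite -subr_ge0.
have -> : u^-1 + 2 * t / (u * u) - (u - t)^-1 = t * (u - 2 * t) / (u * u * (u - t)).
  by field; rewrite !gt_eqF.
by apply: divr_ge0; [apply: mulr_ge0; lra | rewrite !mulr_ge0 ?ltW].
Qed.

Lemma ler_of_linear_slack x y K delta : 0 < delta ->
  (forall t, 0 < t <= delta -> x <= y + t * K) -> x <= y.
Proof.
move=> delta0 H; apply/ler_addgt0Pr => e e0.
set t := Num.min delta (e / (`|K| + 1)).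
have K1 : 0 < `|K| + 1 by have := normr_ge0 K; lra.
have t0 : 0 < t by rewrite lt_min delta0 divr_gt0.
have te : t * (`|K| + 1) <= e by rewrite -ler_pdivlMr // ge_min lexx orbT.
have tK : t * K <= t * `|K| by apply: ler_wpM2l; [exact: ltW | exact: ler_norm].
have td : 0 < t <= delta by rewrite t0 ge_min lexx.
have := H t td; lra.
Qed.

End RealFieldFacts.

Lemma lnB_ge (R : realType) (x y : R) : 0 < x -> 0 < y -> (y - x) / y <= ln y - ln x.
Proof.
move=> x0 y0; have xy0 : 0 < x / y by rewrite divr_gt0.
have xy1 : -1 < x / y - 1 by lra.
have := le_ln1Dx xy1; rewrite (_ : 1 + (x / y - 1) = x / y); last by ring.
rewrite ln_div ?posrE // (_ : (y - x) / y = 1 - x / y); last by rewrite mulrBl divff ?gt_eqF.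
lra.
Qed.

Section Ratio.
Variables (R : realFieldType) (A : nat).
Implicit Types (p q r : 'I_A -> R) (lo hi : R).

Definition ratio_in lo hi p q := forall c, lo * q c <= p c <= hi * q c.

Lemma ratio_in_trans lo1 hi1 lo2 hi2 p q r : 0 <= lo1 -> 0 <= hi1 ->
  ratio_in lo1 hi1 p q -> ratio_in lo2 hi2 q r -> ratio_in (lo1 * lo2) (hi1 * hi2) p r.
Proof.
move=> lo1_ge0 hi1_ge0 pq qr c; have /andP[lq hq] := pq c; have /andP[lr hr] := qr c.
rewrite -!mulrA; apply/andP; split.
- by apply: le_trans lq; apply: ler_wpM2l.
- by apply: le_trans hq _; apply: ler_wpM2l.
Qed.

Lemma ratio_inV lo hi p q : 0 < lo -> 0 < hi ->
  ratio_in lo hi p q -> ratio_in hi^-1 lo^-1 q p.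
Proof.
move=> lo_gt0 hi_gt0 pq c; have /andP[lq hq] := pq c.
by rewrite mulrC ler_pdivrMr // mulrC hq mulrC ler_pdivlMr // mulrC lq.
Qed.

Lemma ratio_inW lo hi lo' hi' p q : (forall c, 0 <= q c) -> lo' <= lo -> hi <= hi' ->
  ratio_in lo hi p q -> ratio_in lo' hi' p q.
Proof.
move=> q_ge0 lo_le hi_le pq c; have /andP[lq hq] := pq c; apply/andP; split.
- by apply: le_trans lq; apply: ler_wpM2r.
- by apply: le_trans hq _; apply: ler_wpM2r.
Qed.

End Ratio.

Section Simplex.
Variables (R : realType) (A : nat).
Implicit Types (p q beta : 'I_A -> R).

Lemma inner_le_ratio lo hi p q beta : (forall c, 0 <= beta c) ->
  ratio_in lo hi p q -> inner p beta <= hi * inner q beta.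
Proof.
move=> beta_ge0 pq; rewrite /inner mulr_sumr; apply: ler_sum => c _.
by rewrite mulrA; apply: ler_wpM2r => //; have /andP[] := pq c.
Qed.

Lemma uniform_in_simplex p : (0 < A)%N ->
  (forall c, p c = A%:R^-1) -> in_simplex p /\ posvec p.
Proof.
move=> A_gt0 pE; have A_inv_gt0 : 0 < A%:R^-1 :> R by rewrite invr_gt0 ltr0n.
split; last by move=> c; rewrite pE.
split=> [c|]; first by rewrite pE ltW.
under eq_bigr do rewrite pE.
by rewrite sumr_const card_ord -[_ *+ A]mulr_natl mulfV // pnatr_eq0 -lt0n.
Qed.

End Simplex.

(* [x c] stands for eta q(c) beta(c) and [mu] for the Lagrange multiplier of
   the constraint sum_c p(c) = 1. *)
Section FixedPoint.
Variables (R : realType) (A : nat).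
Hypothesis A_gt0 : (0 < A)%N.
Variables (p q x : 'I_A -> R) (mu d : R).
Hypotheses (p_gt0 : posvec p) (p_sum : \sum_c p c = 1).
Hypotheses (q_gt0 : posvec q) (q_sum : \sum_c q c = 1).
Hypotheses (x_ge0 : forall c, 0 <= x c) (x_sum : \sum_c x c <= d) (d_small : d <= 1 / 10).
Hypothesis fixed : forall c, p c * (1 - x c + mu * q c) = q c.

Let x_le c : x c <= d.
Proof. by apply: le_trans x_sum; rewrite (bigD1 c) //= lerDl sumr_ge0. Qed.

Let d_ge0 : 0 <= d.
Proof. exact: le_trans (sumr_ge0 _ (fun c _ => x_ge0 c)) x_sum. Qed.

Lemma fixed_point_mu_ge0 : 0 <= mu.
Proof.
rewrite leNgt; apply/negP => mu_lt0.
have q_lt_p c : q c < p c.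
  have : mu * q c < 0 by rewrite pmulr_llt0.
  have := fixed c; have := p_gt0 c; have := x_ge0 c; nra.
have : \sum_c q c < \sum_c p c.
  apply: ltr_sum => [|c _]; last exact: q_lt_p.
  by apply/hasP; exists (Ordinal A_gt0); rewrite ?mem_index_enum.
by rewrite p_sum q_sum ltxx.
Qed.

Let p_mul_1Bx_le c : p c * (1 - x c) <= q c.
Proof.
have : 0 <= p c * (mu * q c) by rewrite !mulr_ge0 ?fixed_point_mu_ge0 ?ltW.
have := fixed c; nra.
Qed.

Lemma fixed_point_le c : p c <= (1 + 2 * d) * q c.
Proof.
(* [lra] ignores section hypotheses, hence they are put in the context. *)
have := d_ge0; have := d_small => d_le d0.
have : 0 <= p c * (d - x c) by rewrite mulr_ge0 ?subr_ge0 ?x_le ?ltW.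
have := p_mul_1Bx_le c => h1 h2.
have pd : p c * (1 - d) <= q c by lra.
have : (1 + 2 * d) * (p c * (1 - d)) <= (1 + 2 * d) * q c by apply: ler_wpM2l => //; lra.
have : 0 <= p c * (d * (1 - 2 * d)) by apply: mulr_ge0; [exact: ltW | apply: mulr_ge0 => //; lra].
lra.
Qed.

Section AtMax.
Variable s : 'I_A.
Hypothesis q_le_s : forall c, q c <= q s.

Let p_le_max c : p c <= q c + 2 * q s * x c.
Proof.
have := d_ge0; have := d_small => d_le d0.
have q_le : (1 + 2 * d) * q c <= 2 * q s.
  have : (1 + 2 * d) * q c <= 2 * q c by apply: ler_wpM2r; [exact: ltW | lra].
  have := q_le_s c; lra.
have : p c * x c <= 2 * q s * x c.
  by apply: ler_wpM2r => //; apply: le_trans q_le; exact: fixed_point_le.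
have := p_mul_1Bx_le c; lra.
Qed.

Lemma fixed_point_ge_at_max : (1 - 2 * d) * q s <= p s.
Proof.
have : \sum_(c | c != s) p c <= \sum_(c | c != s) q c + 2 * q s * \sum_c x c.
  apply: le_trans (ler_sum _ (fun c _ => p_le_max c)) _.
  rewrite big_split /= lerD2l -mulr_sumr; apply: ler_wpM2l.
    by have := q_gt0 s; lra.
  by rewrite [leRHS](bigD1 s) //= lerDr.
have p_split := p_sum; rewrite (bigD1 s) //= in p_split.
have q_split := q_sum; rewrite (bigD1 s) //= in q_split.
have : q s * \sum_c x c <= q s * d by apply: ler_wpM2l => //; exact: ltW.
lra.
Qed.

Lemma fixed_point_mu_le : mu * q s <= 4 * d.
Proof.
have := d_ge0; have := d_small; have := x_le s; have := x_ge0 s => xs0 xsd d_le d0.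
have y0 : 0 <= mu * q s by apply: mulr_ge0; [exact: fixed_point_mu_ge0 | exact: ltW].
have Z0 : 0 < 1 - x s + mu * q s by lra.
have qs0 := q_gt0 s.
have : (1 - 2 * d) * q s * (1 - x s + mu * q s) <= q s.
  by rewrite -[leRHS]fixed; apply: ler_wpM2r; [exact: ltW | exact: fixed_point_ge_at_max].
move=> h; have : q s * ((1 - 2 * d) * (1 - x s + mu * q s)) <= q s * 1 by lra.
rewrite ler_pM2l // => {}h.
have : 0 <= (1 - 2 * d) * (d - x s) by apply: mulr_ge0; lra.
nra.
Qed.

End AtMax.

Lemma fixed_point_ge c : (1 - 4 * d) * q c <= p c.
Proof.
have := d_ge0; have := d_small => d_le d0.
have [s _ q_le_s] := @arg_maxP _ _ 'I_A (Ordinal A_gt0) xpredT q isT.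
have muc : mu * q c <= 4 * d.
  apply: le_trans (fixed_point_mu_le (fun c => q_le_s c isT)).
  by apply: ler_wpM2l; [exact: fixed_point_mu_ge0 | exact: q_le_s].
have pc0 := p_gt0 c.
have : 0 <= p c * (4 * d - mu * q c) by apply: mulr_ge0; lra.
have : 0 <= p c * x c by apply: mulr_ge0 => //; exact: ltW.
have := fixed c => fc h1 h2.
have qc : q c <= (1 + 4 * d) * p c by lra.
have : (1 - 4 * d) * q c <= (1 - 4 * d) * ((1 + 4 * d) * p c) by apply: ler_wpM2l => //; lra.
have : 0 <= d * d * p c by rewrite mulr_ge0 ?mulr_ge0 // ltW.
lra.
Qed.

End FixedPoint.

Section LogBarrierStep.
Variables (R : realType) (A : nat) (eta : R).
Hypothesis eta_gt0 : 0 < eta.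
Implicit Types (beta p q x : 'I_A -> R).

Definition omd_term beta q c (y : R) : R :=
  y * beta c - eta^-1 * ln (1 / y) - (eta * q c)^-1 * (y - q c).

Lemma omd_objectiveE beta q x :
  inner x beta - bregman eta x q = \sum_c omd_term beta q c (x c) + psi eta q.
Proof.
rewrite /bregman /psi /inner /grad_psi /omd_term !big_split /= sumrN -mulr_sumr.
under [X in _ = _ + X + _]eq_bigr do rewrite -mulNr.
ring.
Qed.

Definition transfer p a b (t : R) : 'I_A -> R :=
  fun c => if c == a then p a + t else if c == b then p b - t else p c.

Lemma transfer_in_simplex p a b t : a != b -> in_simplex p -> posvec p ->
  0 < t < p b -> in_simplex (transfer p a b t) /\ posvec (transfer p a b t).
Proof.
move=> ab [_ p_sum] p_gt0 /andP[t0 tb].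
have pos : posvec (transfer p a b t).
  move=> c; rewrite /transfer; case: eqP => _; first by have := p_gt0 a; lra.
  by case: eqP => _; [lra | exact: p_gt0].
split=> //; split=> [c|]; first exact: ltW.
apply/eqP; rewrite -p_sum -subr_eq0 -sumrB (sumr_supported2 ab) => [|c ca cb].
  have ba : b != a by rewrite eq_sym.
  by rewrite /transfer !eqxx (negbTE ba); apply/eqP; ring.
by rewrite /transfer (negbTE ca) (negbTE cb) subrr.
Qed.

Lemma omd_argmax_transfer beta q p a b t : posvec q -> is_omd_argmax eta beta q p ->
  a != b -> 0 < t -> t <= p b / 2 ->
  eta * beta a - (q a)^-1 + (p a + t)^-1 <= eta * beta b - (q b)^-1 + (p b - t)^-1.
Proof.
move=> q_gt0 [p_simplex [p_gt0 p_opt]] ab t0 tb.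
have pa := p_gt0 a; have pb := p_gt0 b; have qa := q_gt0 a; have qb := q_gt0 b.
have pat : 0 < p a + t by lra.
have pbt : 0 < p b - t by lra.
have tpb : 0 < t < p b by apply/andP; lra.
have [x_simplex x_gt0] := transfer_in_simplex ab p_simplex p_gt0 tpb.
have := p_opt _ x_simplex x_gt0.
rewrite !omd_objectiveE lerD2r -subr_ge0 -sumrB (sumr_supported2 ab) => [|c ca cb]; last first.
  by rewrite /transfer (negbTE ca) (negbTE cb) subrr.
have ba : b != a by rewrite eq_sym.
rewrite /transfer !eqxx (negbTE ba) /omd_term !div1r !lnV ?posrE //.
have la : t / (p a + t) <= ln (p a + t) - ln (p a).
  by have := lnB_ge pa pat; rewrite addrAC subrr add0r.
have lb : - (t / (p b - t)) <= ln (p b - t) - ln (p b).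
  by have := lnB_ge pb pbt; rewrite addrAC subrr add0r mulNr.
(* eta times the loss of objective caused by moving t from b to a *)
rewrite [X in 0 <= X -> _](_ : _ = eta^-1 * (t / q a - t / q b
    - eta * t * (beta a - beta b) - (ln (p a + t) - ln (p a)) - (ln (p b - t) - ln (p b)))).
  rewrite pmulr_rge0 ?invr_gt0 // => gain.
  have : 0 <= t * (eta * beta b - (q b)^-1 + (p b - t)^-1 - (eta * beta a - (q a)^-1 + (p a + t)^-1)).
    lra.
  by rewrite pmulr_rge0 // subr_ge0.
by field; rewrite !gt_eqF.
Qed.

Lemma omd_argmax_stationary beta q p : posvec q -> is_omd_argmax eta beta q p ->
  forall a b, eta * beta a - (q a)^-1 + (p a)^-1 <= eta * beta b - (q b)^-1 + (p b)^-1.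
Proof.
move=> q_gt0 p_opt a b; have [-> // | ab] := eqVneq a b.
have [_ [p_gt0 _]] := p_opt; have pa := p_gt0 a; have pb := p_gt0 b.
apply: (@ler_of_linear_slack _ _ _ ((p a * p a)^-1 + 2 / (p b * p b)) (p b / 2)).
  by rewrite divr_gt0.
move=> t /andP[t0 tb].
have := omd_argmax_transfer q_gt0 p_opt ab t0 tb.
have := invfD_ge pa (ltW t0); have := invfB_le pb (ltW t0) tb.
lra.
Qed.

Lemma omd_argmax_fixed_point beta q p : (0 < A)%N -> posvec q -> is_omd_argmax eta beta q p ->
  exists mu, forall c, p c * (1 - eta * q c * beta c + mu * q c) = q c.
Proof.
move=> A_gt0 q_gt0 p_opt; have [_ [p_gt0 _]] := p_opt.
set mu := fun c => eta * beta c - (q c)^-1 + (p c)^-1.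
exists (mu (Ordinal A_gt0)) => c.
have -> : mu (Ordinal A_gt0) = mu c.
  by apply/eqP; rewrite eq_le !(omd_argmax_stationary q_gt0 p_opt).
by rewrite /mu; field; rewrite !gt_eqF.
Qed.

Lemma omd_argmax_ratio beta q p M : (0 < A)%N ->
  in_simplex q -> posvec q -> (forall c, 0 <= beta c) -> inner q beta <= M -> eta * M <= 1 / 10 ->
  is_omd_argmax eta beta q p -> ratio_in (1 - 4 * (eta * M)) (1 + 2 * (eta * M)) p q.
Proof.
move=> A_gt0 [_ q_sum] q_gt0 beta_ge0 qM small p_opt c.
have [mu fixed] := omd_argmax_fixed_point A_gt0 q_gt0 p_opt.
have [[_ p_sum] [p_gt0 _]] := p_opt.
have x_ge0 c' : 0 <= eta * q c' * beta c'.
  exact: mulr_ge0 (mulr_ge0 (ltW eta_gt0) (ltW (q_gt0 c'))) (beta_ge0 c').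
have x_sum : \sum_c' eta * q c' * beta c' <= eta * M.
  under eq_bigr do rewrite -mulrA.
  by rewrite -mulr_sumr; apply: ler_wpM2l; [exact: ltW | exact: qM].
by rewrite (fixed_point_le A_gt0 p_gt0 p_sum q_gt0 q_sum x_ge0 x_sum small fixed)
           (fixed_point_ge A_gt0 p_gt0 p_sum q_gt0 q_sum x_ge0 x_sum small fixed).
Qed.

End LogBarrierStep.

Lemma omd_round_slack (R : realFieldType) (e d1 d2 : R) : 0 < e -> e <= 1 / 270 ->
  d1 = e * (1 + 10 * e) -> d2 = (1 + 2 * d1) * d1 ->
  0 <= d1 <= 6 / 5 * e /\ 0 <= d2 <= 6 / 5 * e.
Proof.
move=> e_gt0 e_small -> ->.
have ee : e * e <= 1 / 270 * e by apply: ler_wpM2r; lra.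
have d1_ge0 : 0 <= e * (1 + 10 * e) by rewrite mulr_ge0 //; lra.
have d1_le : e * (1 + 10 * e) <= 11 / 10 * e by lra.
have : (e * (1 + 10 * e)) * (e * (1 + 10 * e)) <= (11 / 10 * e) * (11 / 10 * e).
  by apply: ler_pM.
split; apply/andP; split; try lra.
by rewrite mulr_ge0 //; lra.
Qed.

Lemma omd_round_constants (R : realFieldType) (e d1 d2 : R) : 0 < e -> e <= 1 / 270 ->
  0 <= d1 <= 6 / 5 * e -> 0 <= d2 <= 6 / 5 * e ->
  [/\ (1 + 10 * e)^-1 <= (1 + 2 * d2)^-1, (1 - 4 * d2)^-1 <= 1 + 10 * e,
      1 - 20 * e <= (1 - 4 * d2) * ((1 - 4 * d1) / (1 + 10 * e)) &
      (1 + 2 * d2) * ((1 + 2 * d1) * (1 + 10 * e)) <= 1 + 20 * e].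
Proof.
move=> e_gt0 e_small d1_bounds d2_bounds.
have /andP[d1_ge0 d1_le] := d1_bounds; have /andP[d2_ge0 d2_le] := d2_bounds.
have e_ge0 := ltW e_gt0.
have ee0 : 0 <= e * e by rewrite mulr_ge0.
have ee : e * e <= e * (1 / 270) by apply: ler_wpM2l.
have eee : e * e * e <= e * e * (1 / 270) by apply: ler_wpM2l.
have ed2 : e * d2 <= e * (6 / 5 * e) by apply: ler_wpM2l.
have lo : (1 - 24 / 5 * e) * (1 - 24 / 5 * e) <= (1 - 4 * d2) * (1 - 4 * d1).
  by apply: ler_pM; lra.
have hi : (1 + 2 * d2) * (1 + 2 * d1) <= (1 + 12 / 5 * e) * (1 + 12 / 5 * e).
  by apply: ler_pM; lra.
have hi' : (1 + 2 * d2) * (1 + 2 * d1) * (1 + 10 * e)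
           <= (1 + 12 / 5 * e) * (1 + 12 / 5 * e) * (1 + 10 * e).
  by apply: ler_wpM2r => //; lra.
split.
- by rewrite lef_pV2 ?posrE; lra.
- by rewrite -div1r ler_pdivrMr; lra.
- by rewrite mulrA ler_pdivlMr; lra.
- by rewrite mulrA; lra.
Qed.

Section OMDRound.
Variables (R : realType) (A : nat) (eta C : R).
Implicit Types (p q beta : 'I_A -> R).

Local Notation e := (eta * C).

Definition omd_state p p' := [/\ in_simplex p, posvec p, in_simplex p', posvec p' &
  ratio_in (1 + 10 * e)^-1 (1 + 10 * e) p' p].

Lemma omd_round beta p p' pn pn' : (0 < A)%N -> 0 < eta -> 0 < e -> e <= 1 / 270 ->
  omd_state p p' ->
  (forall c, 0 <= beta c) -> inner p beta <= C ->
  is_omd_argmax eta beta p' pn' -> is_omd_argmax eta beta pn' pn ->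
  omd_state pn pn' /\ ratio_in (1 - 20 * e) (1 + 20 * e) pn p.
Proof.
move=> A_gt0 eta_gt0 e_gt0 e_small [p_simplex p_gt0 p'_simplex p'_gt0 p'p] beta_ge0 pC opt1 opt2.
have [pn'_simplex [pn'_gt0 _]] := opt1; have [pn_simplex [pn_gt0 _]] := opt2.
set d1 := e * (1 + 10 * e); set d2 := (1 + 2 * d1) * d1.
have [d1_bounds d2_bounds] := omd_round_slack e_gt0 e_small (erefl d1) (erefl d2).
have [lo' hi' lo hi] := omd_round_constants e_gt0 e_small d1_bounds d2_bounds.
have /andP[d1_ge0 d1_le] := d1_bounds; have /andP[d2_ge0 d2_le] := d2_bounds.
have p'C : inner p' beta <= (1 + 10 * e) * C.
  by apply: le_trans (inner_le_ratio beta_ge0 p'p) _; apply: ler_wpM2l => //; lra.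
have ed1 : eta * ((1 + 10 * e) * C) = d1 by rewrite /d1; ring.
have := omd_argmax_ratio eta_gt0 A_gt0 p'_simplex p'_gt0 beta_ge0 p'C; rewrite ed1.
have d1_small : d1 <= 1 / 10 by lra.
move=> /(_ _ d1_small opt1) pn'p'.
have pn'C : inner pn' beta <= (1 + 2 * d1) * ((1 + 10 * e) * C).
  by apply: le_trans (inner_le_ratio beta_ge0 pn'p') _; apply: ler_wpM2l => //; lra.
have ed2 : eta * ((1 + 2 * d1) * ((1 + 10 * e) * C)) = d2 by rewrite /d2 -ed1; ring.
have := omd_argmax_ratio eta_gt0 A_gt0 pn'_simplex pn'_gt0 beta_ge0 pn'C; rewrite ed2.
have d2_small : d2 <= 1 / 10 by lra.
move=> /(_ _ d2_small opt2) pnpn'.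
have pn'pn : ratio_in (1 + 2 * d2)^-1 (1 - 4 * d2)^-1 pn' pn.
  by apply: ratio_inV pnpn'; lra.
have pnp : ratio_in ((1 - 4 * d2) * ((1 - 4 * d1) / (1 + 10 * e)))
                    ((1 + 2 * d2) * ((1 + 2 * d1) * (1 + 10 * e))) pn p.
  by apply: ratio_in_trans pnpn' (ratio_in_trans _ _ pn'p' p'p); lra.
split; first split => //.
  by apply: ratio_inW pn'pn => // c; exact: ltW.
by apply: ratio_inW pnp => // c; exact: ltW.
Qed.

End OMDRound.

Section OMDRun.
Variables (R : realType) (A K : nat) (eta C : R) (pi pi' beta : nat -> 'I_A -> R).
Hypotheses (A_gt0 : (0 < A)%N) (eta_gt0 : 0 < eta).
Hypotheses (e_gt0 : 0 < eta * C) (e_small : eta * C <= 1 / 270).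
Hypotheses (pi1 : forall c, pi 1%N c = A%:R^-1) (pi'1 : forall c, pi' 1%N c = A%:R^-1).
Hypothesis omd_steps : forall k, (1 <= k <= K)%N ->
  (forall c, 0 <= beta k c) /\ inner (pi k) (beta k) <= C /\
  is_omd_argmax eta (beta k) (pi' k) (pi' k.+1) /\
  is_omd_argmax eta (beta k) (pi' k.+1) (pi k.+1).

Lemma omd_state_init : omd_state eta C (pi 1%N) (pi' 1%N).
Proof.
have [pi1_simplex pi1_gt0] := uniform_in_simplex A_gt0 pi1.
have [pi'1_simplex pi'1_gt0] := uniform_in_simplex A_gt0 pi'1.
split=> // c; rewrite pi1 pi'1; have := pi1_gt0 c; rewrite pi1 => A_inv_gt0.
have e10 : 1 <= 1 + 10 * (eta * C) by have := e_gt0; lra.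
apply/andP; split; last exact: ler_peMl (ltW _) e10.
by apply: ler_piMl; [exact: ltW | rewrite invf_le1; lra].
Qed.

Lemma omd_state_run k : (1 <= k <= K)%N -> omd_state eta C (pi k) (pi' k).
Proof.
elim: k => [//|[_ _|k IHk /andP[_ kK]]]; first exact: omd_state_init.
have kK' : (1 <= k.+1 <= K)%N by rewrite /= (ltnW kK).
have [beta_ge0 [piC [opt1 opt2]]] := omd_steps kK'.
exact: (omd_round A_gt0 eta_gt0 e_gt0 e_small (IHk kK') beta_ge0 piC opt1 opt2).1.
Qed.

Lemma omd_run_ratio k : (1 <= k <= K)%N ->
  ratio_in (1 - 20 * (eta * C)) (1 + 20 * (eta * C)) (pi k.+1) (pi k).
Proof.
move=> kK; have [beta_ge0 [piC [opt1 opt2]]] := omd_steps kK.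
exact: (omd_round A_gt0 eta_gt0 e_gt0 e_small (omd_state_run kK) beta_ge0 piC opt1 opt2).2.
Qed.

End OMDRun.

Theorem mainTheorem6 (R : realType) (A K N : nat) (eta : R)
  (pi pi' beta : nat -> 'I_A -> R) :
  (1 <= A)%N -> (1 <= K)%N -> (1 <= N)%N ->
  0 < eta -> eta <= (270 * (N.+1)%:R)^-1 ->
  (forall a, pi 1%N a = (A%:R)^-1) ->
  (forall a, pi' 1%N a = (A%:R)^-1) ->
  (forall k, (1 <= k <= K)%N ->
     (forall a, 0 <= beta k a) /\
     inner (pi k) (beta k) <= (N.+1)%:R /\
     is_omd_argmax eta (beta k) (pi' k) (pi' k.+1) /\
     is_omd_argmax eta (beta k) (pi' k.+1) (pi k.+1)) ->
  forall k, (1 <= k <= K)%N -> forall a : 'I_A,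
    `| pi k.+1 a - pi k a | <= 120 * eta * (N.+1)%:R * pi k a.
Proof.
move=> A_gt0 _ _ eta_gt0 eta_le pi1 pi'1 omd_steps k kK a.
set C : R := (N.+1)%:R.
have C_gt0 : 0 < C by rewrite ltr0n.
have e_gt0 : 0 < eta * C by rewrite mulr_gt0.
have e_small : eta * C <= 1 / 270.
  apply: le_trans (ler_wpM2r (ltW C_gt0) eta_le) _.
  by rewrite invfM -mulrA mulVf ?gt_eqF // mulr1 div1r.
have [_ pk_gt0 _ _ _] := omd_state_run A_gt0 eta_gt0 e_gt0 e_small pi1 pi'1 omd_steps kK.
have /andP[lo hi] := omd_run_ratio A_gt0 eta_gt0 e_gt0 e_small pi1 pi'1 omd_steps kK a.
have := mulr_ge0 (ltW e_gt0) (ltW (pk_gt0 a)).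
rewrite ler_norml; lra.
Qed.
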